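(* Let $I$ be an ideal in a Noetherian ring $A$ containing a regular element (non-zero-divisor) of $A$, and let $\tilde{I}=\bigcup_{n\ge0}(I^{n+1}:I^n)$ be the Ratliff–Rush ideal associated with $I$. Then $\tilde{I}\subset{}^*I$.
   Context: For an ideal $I$ of $A$, an element $b\in A$ is weakly subintegral over $I$ if there exist $q\in\mathbb{N}$ and elements $a_i\in I^i$ ($1\le i\le 2q+1$) such that $b^n+\sum_{i=1}^n\binom{n}{i}a_ib^{n-i}=0$ for all $n$ with $q+1\le n\le 2q+1$. The weak subintegral closure ${}^*I$ of $I$ is the set of elements of $A$ weakly subintegral over $I$. *)

From HB Require Import structures.
From mathcomp Require Import all_boot all_order all_algebra.
Set Implicit Arguments. Unset Strict Implicit. Unset Printing Implicit Defensive.
Import Order.TTheory GRing.Theory Num.Theory.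
Local Open Scope ring_scope.

Section CommAlg.
Variable A : comNzRingType.

Definition is_ideal (I : A -> Prop) : Prop :=
  [/\ I 0, (forall x y, I x -> I y -> I (x + y)) & (forall r x, I x -> I (r * x))].

Definition ideal_mul (J K : A -> Prop) : A -> Prop :=
  fun x => exists s : seq (A * A),
    (forall p, p \in s -> J p.1 /\ K p.2) /\ x = \sum_(p <- s) p.1 * p.2.

Fixpoint ideal_pow (I : A -> Prop) (n : nat) : A -> Prop :=
  match n with
  | 0 => fun _ => True
  | n'.+1 => ideal_mul (ideal_pow I n') I
  end.

Definition colon (J K : A -> Prop) : A -> Prop :=
  fun x => forall y, K y -> J (x * y).

Definition ratliff_rush (I : A -> Prop) : A -> Prop :=
  fun x => exists n : nat, colon (ideal_pow I n.+1) (ideal_pow I n) x.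

Definition weakly_subintegral (I : A -> Prop) (b : A) : Prop :=
  exists (q : nat) (a : nat -> A),
    (forall i, (1 <= i <= 2 * q + 1)%N -> ideal_pow I i (a i)) /\
    (forall n, (q + 1 <= n <= 2 * q + 1)%N ->
       b ^+ n + \sum_(1 <= i < n.+1) ('C(n, i))%:R * a i * b ^+ (n - i) = 0).

Definition weak_subintegral_closure (I : A -> Prop) : A -> Prop :=
  fun b => weakly_subintegral I b.

Definition regular (r : A) : Prop := forall x : A, r * x = 0 -> x = 0.

Definition noetherian : Prop :=
  forall J : nat -> A -> Prop,
    (forall n, is_ideal (J n)) ->
    (forall n x, J n x -> J n.+1 x) ->
    exists N, forall m, (N <= m)%N -> forall x, J m x -> J N x.

End CommAlg.

From HB Require Import structures.
From mathcomp Require Import all_boot all_order all_algebra ring zify.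
From mathcomp Require Import boolp.
Set Implicit Arguments. Unset Strict Implicit. Unset Printing Implicit Defensive.
Import GRing.Theory.
Local Open Scope ring_scope.

(* Let x I^N ⊆ I^(N+1).  Since A is Noetherian, I^N is generated by finitely many
   g_1, ..., g_m, and x g_j = Σ_l c_jl g_l with c_jl ∈ I.  Cayley–Hamilton applied
   to the matrix (c_jl t) over A[t] yields, after cancelling a regular element of
   I^N, an equation of integral dependence x^n + Σ_j f_j x^j = 0 with f_j ∈ I^(n-j);
   keeping track of the degree in t is what places f_j in I^(n-j).  Reducing high
   powers of x with this equation and using x I^m ⊆ I^(m+1) for m ≥ N gives
   x^k ∈ I^k for all large k.  Finally, x^k ∈ I^k for k > q is all weak
   subintegrality needs: take a_i = r_i x^i, where the r_i solve the unitriangular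
   system 1 + Σ_{i ≤ n} C(n, i) r_i = 0 (q < n ≤ 2q+1), with r_i = 0 for i ≤ q. *)

Section Ideals.
Variable A : comNzRingType.
Implicit Types (J K : A -> Prop) (y z : A).

Lemma ideal0 J : is_ideal J -> J 0.
Proof. by case. Qed.

Lemma idealD J y z : is_ideal J -> J y -> J z -> J (y + z).
Proof. by case=> _ JD _; apply: JD. Qed.

Lemma idealMl J y z : is_ideal J -> J z -> J (y * z).
Proof. by case=> _ _ JM; apply: JM. Qed.

Lemma idealMr J y z : is_ideal J -> J y -> J (y * z).
Proof. by move=> J_ideal Jy; rewrite mulrC; apply: idealMl. Qed.

Lemma idealN J z : is_ideal J -> J z -> J (- z).
Proof. by move=> J_ideal Jz; rewrite -mulN1r; apply: idealMl. Qed.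

Lemma ideal_sum J (T : Type) (s : seq T) (P : pred T) (F : T -> A) :
  is_ideal J -> (forall i, P i -> J (F i)) -> J (\sum_(i <- s | P i) F i).
Proof.
by move=> J_ideal JF; apply: (big_ind J) => //; [apply: ideal0 | move=> y z; apply: idealD].
Qed.

Lemma is_ideal_mul J K : is_ideal J -> is_ideal (ideal_mul J K).
Proof.
move=> J_ideal; split.
- by exists [::]; rewrite big_nil.
- move=> _ _ [s [sJK ->]] [t [tJK ->]]; exists (s ++ t); rewrite big_cat.
  by split=> // p; rewrite mem_cat => /orP[/sJK | /tJK].
- move=> a _ [s [sJK ->]]; exists [seq (a * p.1, p.2) | p <- s]; split.
    by move=> _ /mapP[p /sJK[Jp Kp] ->]; split=> //; apply: idealMl.
  by rewrite big_map mulr_sumr; apply: eq_bigr => p _; rewrite mulrA.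
Qed.

Lemma ideal_mulMl J J' K y z :
  (forall z, J z -> J' (y * z)) -> ideal_mul J K z -> ideal_mul J' K (y * z).
Proof.
move=> JM [s [sJK ->]]; exists [seq (y * p.1, p.2) | p <- s]; split.
  by move=> _ /mapP[p /sJK[Jp Kp] ->]; split=> //; apply: JM.
by rewrite big_map mulr_sumr; apply: eq_bigr => p _; rewrite mulrA.
Qed.

Variable I : A -> Prop.

Lemma is_ideal_pow n : is_ideal (ideal_pow I n).
Proof. by elim: n => [|n IHn] /=; [split | apply: is_ideal_mul]. Qed.

Lemma ideal_pow1 z : I z -> ideal_pow I 1 z.
Proof.
move=> Iz; exists [:: (1, z)]; rewrite big_seq1 mul1r.
by split=> // p; rewrite inE => /eqP ->.
Qed.

Lemma ideal_powD m n y z :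
  ideal_pow I m y -> ideal_pow I n z -> ideal_pow I (m + n) (y * z).
Proof.
move=> Iy; elim: n z => [|n IHn] z Iz.
  by rewrite addn0; apply: idealMr => //; apply: is_ideal_pow.
by rewrite addnS; apply: ideal_mulMl Iz => z'; apply: IHn.
Qed.

Lemma ideal_pow_expr n z : I z -> ideal_pow I n (z ^+ n).
Proof.
move=> Iz; elim: n => [|n IHn] //.
by rewrite exprSr -addn1; apply: ideal_powD => //; apply: ideal_pow1.
Qed.

End Ideals.

Lemma regularX (A : comNzRingType) (r : A) n : regular r -> regular (r ^+ n).
Proof.
move=> r_reg; elim: n => [|n IHn] y; first by rewrite expr0 mul1r.
by rewrite exprS -mulrA => /r_reg /IHn.
Qed.

Definition lin_comb (A : comNzRingType) (K : A -> Prop) (g : seq A) (z : A) : Prop :=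
  exists c : nat -> A, (forall i, K (c i)) /\ z = \sum_(i < size g) c i * g`_i.

Notation span := (lin_comb (fun=> True)).

Section LinearCombinations.
Variable A : comNzRingType.
Implicit Types (J K : A -> Prop) (g : seq A) (a y z : A).

Lemma is_ideal_lin_comb K g : is_ideal K -> is_ideal (lin_comb K g).
Proof.
move=> K_ideal; split.
- exists (fun=> 0); split=> [i | ]; first exact: ideal0.
  by rewrite big1 // => i _; rewrite mul0r.
- move=> _ _ [c [Kc ->]] [d [Kd ->]]; exists (fun i => c i + d i); split.
    by move=> i; apply: idealD.
  by rewrite -big_split; apply: eq_bigr => i _; rewrite mulrDl.
- move=> a _ [c [Kc ->]]; exists (fun i => a * c i); split.
    by move=> i; apply: idealMl.
  by rewrite mulr_sumr; apply: eq_bigr => i _; rewrite mulrA.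
Qed.

Lemma span_mem g z : z \in g -> span g z.
Proof.
move=> gz; have gzi : (index z g < size g)%N by rewrite index_mem.
exists (fun i => (i == index z g)%:R); split=> //.
rewrite (bigD1 (Ordinal gzi)) //= eqxx mul1r nth_index // big1 ?addr0 //.
by move=> i /negbTE; rewrite -val_eqE /= => ->; rewrite mul0r.
Qed.

Lemma span_cons a g z : span g z -> span (a :: g) z.
Proof.
case=> c [_ ->]; exists (fun i => if i is i'.+1 then c i' else 0); split=> //.
by rewrite /= big_ord_recl /= mul0r add0r.
Qed.

Lemma lin_comb_ideal_mul J K g z : is_ideal K ->
  (forall y, J y -> span g y) -> ideal_mul J K z -> lin_comb K g z.
Proof.
move=> K_ideal Jg [s [sJK ->]]; elim: s sJK => [|p s IHs] sJK.
  by rewrite big_nil; apply: ideal0; apply: is_ideal_lin_comb.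
rewrite big_cons; apply: idealD; first exact: is_ideal_lin_comb.
  have [Jp Kp] := sJK p (mem_head _ _); have [c [_ ->]] := Jg _ Jp.
  exists (fun i => c i * p.2); split=> [i | ]; first exact: idealMl.
  by rewrite mulr_suml; apply: eq_bigr => i _; rewrite mulrAC.
by apply: IHs => q sq; apply: sJK; rewrite inE sq orbT.
Qed.

Lemma noetherian_finitely_generated J : noetherian A -> is_ideal J ->
  exists g, (forall z, z \in g -> J z) /\ forall z, J z -> span g z.
Proof.
move=> noethA J_ideal; apply: contrapT => not_fg.
have grow g : exists z, (forall y, y \in g -> J y) -> J z /\ ~ span g z.
  case: (pselect (forall y, y \in g -> J y)) => [gJ | ngJ]; last by exists 0.
  apply: contrapT => no_z; apply: not_fg; exists g; split=> // z Jz.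
  by apply: contrapT => nz; apply: no_z; exists z.
have [next nextP] := choice grow.
pose chain n := iter n (fun g => next g :: g) [::].
have chainJ n y : y \in chain n -> J y.
  elim: n y => [|n IHn] y //=; rewrite inE => /orP[/eqP -> | ]; last exact: IHn.
  by have [] := nextP _ IHn.
have span_ideal n : is_ideal (span (chain n)) by apply: is_ideal_lin_comb; split.
have [N chainN] := noethA _ span_ideal (fun n y => @span_cons _ (chain n) y).
have [_] := nextP _ (chainJ N); apply.
exact: chainN (leqnSn N) _ (span_mem (mem_head _ _)).
Qed.

End LinearCombinations.

Lemma det_mxOver (R : comNzRingType) (S : subringClosed R) n (M : 'M[R]_n) :
  M \is a mxOver S -> \det M \in S.
Proof.
move=> /mxOverP SM; apply: rpred_sum => s _; apply: rpredM.
  by apply: rpredX; apply: rpredN1.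
by apply: rpred_prod => i _; apply: SM.
Qed.

Lemma char_poly_over (R : comNzRingType) (S : subringClosed R) n (M : 'M[R]_n) :
  M \is a mxOver S -> char_poly M \is a polyOver S.
Proof.
move=> /mxOverP SM; rewrite /char_poly; apply: det_mxOver; apply/mxOverP => i j.
by rewrite !mxE; apply: rpredB; [apply: rpredMn; apply: polyOverX | rewrite polyOverC].
Qed.

Lemma horner_mx_eigenvector (R : comNzRingType) n (M : 'M[R]_n.+1) (v : 'cV[R]_n.+1) a :
  M *m v = a *: v -> forall p, horner_mx M p *m v = p.[a] *: v.
Proof.
move=> Mv; elim/poly_ind => [|p c IHp]; first by rewrite rmorph0 mul0mx horner0 scale0r.
rewrite rmorphD rmorphM /= horner_mx_X horner_mx_C hornerMXaddC mulmxDl -mulmxA Mv.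
by rewrite mul_scalar_mx -scalemxAr IHp scalerA scalerDl mulrC.
Qed.

Lemma char_poly_eigenvector (R : comNzRingType) n (M : 'M[R]_n.+1) (v : 'cV[R]_n.+1) a :
  M *m v = a *: v -> (char_poly M).[a] *: v = 0.
Proof.
by move=> /horner_mx_eigenvector <-; rewrite Cayley_Hamilton mul0mx.
Qed.

Lemma regular_polyC (A : comNzRingType) (r : A) : regular r -> regular r%:P.
Proof.
move=> r_reg p /polyP rp0; apply/polyP => k.
by rewrite coef0; apply: r_reg; have := rp0 k; rewrite coefCM coef0.
Qed.

Lemma coef_horner_CX (A : comNzRingType) (P : {poly {poly A}}) (x : A) n :
  size P = n.+1 -> P.[x%:P * 'X]`_n = \sum_(j < n.+1) (P`_j)`_(n - j) * x ^+ j.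
Proof.
move=> size_P; rewrite horner_coef size_P coef_sum; apply: eq_bigr => j _.
by rewrite exprMn mulrA coefMXn ltnNge -ltnS ltn_ord /= -rmorphXn coefMC.
Qed.

Section ReesAlgebra.
Variables (A : comNzRingType) (I : A -> Prop).

Definition rees_algebra : {pred {poly A}} :=
  fun p => `[< forall k, ideal_pow I k p`_k >].

Lemma rees_algebraP (p : {poly A}) : reflect (forall k, ideal_pow I k p`_k) (p \in rees_algebra).
Proof. exact: asboolP. Qed.

Fact rees_algebra_subring_closed : subring_closed rees_algebra.
Proof.
split.
- by apply/rees_algebraP => -[|k]; rewrite coef1 //; apply: ideal0; apply: is_ideal_pow.
- move=> p q /rees_algebraP Sp /rees_algebraP Sq; apply/rees_algebraP => k.
  by rewrite coefB; apply: idealD (idealN _ _) => //; apply: is_ideal_pow.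
- move=> p q /rees_algebraP Sp /rees_algebraP Sq; apply/rees_algebraP => k.
  rewrite coefM; apply: ideal_sum => [|i _]; first exact: is_ideal_pow.
  by rewrite -{1}(subnKC (ltnSE (ltn_ord i))); apply: ideal_powD.
Qed.

HB.instance Definition _ :=
  GRing.isSubringClosed.Build {poly A} rees_algebra rees_algebra_subring_closed.

Lemma rees_algebraCX c : I c -> c%:P * 'X \in rees_algebra.
Proof.
move=> Ic; apply/rees_algebraP => -[|[|k]]; rewrite coefCM coefX ?mulr0 ?mulr1.
- exact: ideal0 (is_ideal_pow I _).
- exact: ideal_pow1.
- exact: ideal0 (is_ideal_pow I _).
Qed.

Definition integral_equation (x : A) (n : nat) (f : nat -> A) : Prop :=
  (forall j, (j < n)%N -> ideal_pow I (n - j) (f j)) /\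
  x ^+ n + \sum_(j < n) f j * x ^+ j = 0.

Lemma determinant_trick (g : seq A) (x r : A) :
  regular r -> span g r -> (forall j, (j < size g)%N -> lin_comb I g (x * g`_j)) ->
  exists n f, integral_equation x n.+1 f.
Proof.
move=> r_reg r_span xg.
have [n size_g] : exists n, size g = n.+1.
  move: r_span; rewrite /lin_comb; case: (size g) => [|n] [d [_ r_sum]]; last by exists n.
  have := r_reg 1; rewrite r_sum big_ord0 mul0r => /(_ erefl) /eqP.
  by rewrite oner_eq0.
have /fin_all_exists[c cP] (j : 'I_n.+1) : exists c : nat -> A,
    (forall l, I (c l)) /\ x * g`_j = \sum_(l < n.+1) c l * g`_l.
  by have := xg j; rewrite /lin_comb size_g => /(_ (ltn_ord j)).
move: r_span; rewrite /lin_comb size_g => -[d [_ r_sum]].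
pose M : 'M[{poly A}]_n.+1 := \matrix_(j, l) ((c j l)%:P * 'X).
pose G : 'cV[{poly A}]_n.+1 := \col_j (g`_j)%:P.
pose y : {poly A} := x%:P * 'X.
pose P := char_poly M.
have MG : M *m G = y *: G.
  apply/matrixP => j k; rewrite !mxE.
  have -> : y * (g`_j)%:P = 'X * (x * g`_j)%:P by rewrite polyCM /y; ring.
  rewrite (cP j).2 rmorph_sum mulr_sumr; apply: eq_bigr => l _.
  by rewrite !mxE rmorphM /=; ring.
have Py0 : P.[y] = 0.
  apply: (regular_polyC r_reg); rewrite r_sum rmorph_sum mulr_suml big1 // => j _.
  have /matrixP /(_ j 0) := char_poly_eigenvector MG; rewrite !mxE => PyG.
  by rewrite rmorphM /= -mulrA (mulrC _ P.[y]) PyG mulr0.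
have P_rees : P \is a polyOver rees_algebra.
  apply: char_poly_over; apply/mxOverP => j l; rewrite mxE.
  exact: rees_algebraCX ((cP j).1 l).
exists n, (fun j => (P`_j)`_(n.+1 - j)); split.
  by move=> j _; apply/rees_algebraP; apply: (polyOverP P_rees).
have P_lead : P`_n.+1 = 1.
  by have := char_poly_monic M; rewrite monicE lead_coefE size_char_poly => /eqP.
have := coef_horner_CX x (size_char_poly M); rewrite -/P Py0 coef0 big_ord_recr /=.
by rewrite P_lead subnn coefC /= mul1r addrC => <-.
Qed.

End ReesAlgebra.

Section EventualPowers.
Variables (A : comNzRingType) (I : A -> Prop) (N : nat) (x : A).
Hypothesis x_colon : colon (ideal_pow I N.+1) (ideal_pow I N) x.

Lemma colon_ideal_pow m y : (N <= m)%N -> ideal_pow I m y -> ideal_pow I m.+1 (x * y).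
Proof.
move=> /subnKC <-; elim: (m - N)%N y => [|t IHt] y; first by rewrite addn0; apply: x_colon.
by rewrite addnS; apply: ideal_mulMl.
Qed.

Lemma colon_ideal_powX j m y :
  (N <= m)%N -> ideal_pow I m y -> ideal_pow I (m + j) (x ^+ j * y).
Proof.
move=> Nm Iy; elim: j => [|j IHj]; first by rewrite addn0 expr0 mul1r.
by rewrite exprS -mulrA addnS; apply: colon_ideal_pow => //; lia.
Qed.

Variables (n : nat) (f : nat -> A).
Hypothesis x_integral : integral_equation I x n.+1 f.

Lemma integral_expr_reduce t : exists c : nat -> A,
  (forall j, (j <= n)%N -> ideal_pow I (n + t - j) (c j)) /\
  x ^+ (n + t) = \sum_(j < n.+1) c j * x ^+ j.
Proof.
have [fI xf] := x_integral.
elim: t => [|t [c [cI xc]]].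
  exists (fun j => (j == n)%:R); split.
    move=> j _; case: eqP => [-> | _]; first by rewrite addn0 subnn.
    exact: ideal0 (is_ideal_pow I _).
  rewrite big_ord_recr /= eqxx mul1r addn0 big1 ?add0r // => i _.
  by rewrite (ltn_eqF (ltn_ord i)) mul0r.
exists (fun j => (if j is j'.+1 then c j' else 0) - c n * f j); split.
  move=> j jn; apply: idealD; first exact: is_ideal_pow.
    case: j jn => [|j] jn; first exact: ideal0 (is_ideal_pow I _).
    have -> : (n + t.+1 - j.+1 = n + t - j)%N by lia.
    by apply: cI; lia.
  have -> : (n + t.+1 - j = n + t - n + (n.+1 - j))%N by lia.
  by apply: idealN; [apply: is_ideal_pow | apply: ideal_powD; [apply: cI | apply: fI]].
have xn : x ^+ n.+1 = - \sum_(j < n.+1) f j * x ^+ j.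
  by apply/eqP; rewrite -addr_eq0 xf.
rewrite addnS exprS xc mulr_sumr big_ord_recr /= mulrCA -exprS xn.
under [RHS]eq_bigr => i _ do rewrite mulrBl -mulrA.
rewrite sumrB [X in _ = X - _]big_ord_recl /= mul0r add0r -mulr_sumr mulrN.
congr (_ - _); last by rewrite mulr_sumr.
by rewrite mulr_sumr; apply: eq_bigr => i _; rewrite /bump /= add0n exprS mulrCA.
Qed.

Lemma ideal_pow_expr_eventually k : (N + n.+1 <= k)%N -> ideal_pow I k (x ^+ k).
Proof.
move=> Nk; have [c [cI xk]] := integral_expr_reduce (k - n).
have nk : (n + (k - n) = k)%N by lia.
rewrite nk in cI xk; rewrite xk; apply: ideal_sum => [|j _]; first exact: is_ideal_pow.
have jn := ltn_ord j; rewrite mulrC -[X in ideal_pow I X](@subnK j k); last by lia.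
by apply: colon_ideal_powX; [lia | apply: cI].
Qed.

End EventualPowers.

Lemma binomial_annihilator (R : comNzRingType) (q m : nat) : exists r : nat -> R,
  (forall i, (i <= q)%N -> r i = 0) /\
  forall n, (q < n <= m)%N -> 1 + \sum_(1 <= i < n.+1) ('C(n, i))%:R * r i = 0.
Proof.
elim: m => [|m [r [r0 rP]]]; first by exists (fun=> 0); split=> // n; lia.
have [mq | qm] := leqP m.+1 q; first by exists r; split=> // n; lia.
pose S := 1 + \sum_(1 <= i < m.+2) ('C(m.+1, i))%:R * r i.
exists (fun i => if i == m.+1 then r i - S else r i); split.
  by move=> i iq; case: eqP => [| _]; [lia | apply: r0].
have sum_low k l : (l <= m)%N -> \sum_(1 <= i < l.+1)
    ('C(k, i))%:R * (if i == m.+1 then r i - S else r i) =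
    \sum_(1 <= i < l.+1) ('C(k, i))%:R * r i.
  by move=> lm; apply: eq_big_nat => i il; case: eqP => //; lia.
move=> n /andP[qn nm]; have [nm' | mn] := leqP n m.
  by rewrite sum_low // rP // qn.
have -> : n = m.+1 by lia.
rewrite big_nat_recr //= sum_low // eqxx binn mul1r.
have -> : S = 1 + \sum_(1 <= i < m.+1) ('C(m.+1, i))%:R * r i + r m.+1.
  by rewrite /S big_nat_recr //= binn mul1r addrA.
by ring.
Qed.

Lemma weakly_subintegral_of_expr (A : comNzRingType) (I : A -> Prop) (x : A) (K : nat) :
  (forall k, (K <= k)%N -> ideal_pow I k (x ^+ k)) ->
  weakly_subintegral I x.
Proof.
move=> xK; have [r [r0 rP]] := binomial_annihilator A K (2 * K + 1).
exists K, (fun i => r i * x ^+ i); split.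
  move=> i _; have [iK | Ki] := leqP i K.
    by rewrite r0 // mul0r; apply: ideal0 (is_ideal_pow I _).
  by apply: idealMl; [apply: is_ideal_pow | apply: xK; lia].
move=> n /andP[Kn n2K].
rewrite (@eq_big_nat _ _ _ 1 n.+1 _ (fun i => ('C(n, i))%:R * r i * x ^+ n)).
  by rewrite -mulr_suml -{1}[x ^+ n]mul1r -mulrDl rP ?mul0r //; lia.
by move=> i /andP[_ iSn]; rewrite -!mulrA -exprD subnKC.
Qed.

Theorem mainTheorem11 (A : comNzRingType) (I : A -> Prop) :
  noetherian A -> is_ideal I -> (exists r, I r /\ regular r) ->
  forall x : A, ratliff_rush I x -> weak_subintegral_closure I x.
Proof.
move=> noethA I_ideal [r [Ir r_reg]] x [N x_colon].
have [g [gIN IN_span]] := noetherian_finitely_generated noethA (is_ideal_pow I N).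
have [n [f x_integral]] : exists n f, integral_equation I x n.+1 f.
  apply: (determinant_trick (regularX (n := N) r_reg)).
    exact/IN_span/ideal_pow_expr.
  move=> j jg; apply: (lin_comb_ideal_mul I_ideal IN_span).
  exact/x_colon/gIN/mem_nth.
apply: (@weakly_subintegral_of_expr _ _ _ (N + n.+1)).
exact: (ideal_pow_expr_eventually x_colon x_integral).
Qed.
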